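(* Let $I$ be a finite set of positive integers and $m=\max(I\cup\{0\})$. If $z_0$ is a real root of $d(I;z)$, then $z_0\le 2m-1$.
   Context: $d(I;z)$ is the descent polynomial: the unique polynomial whose value at each integer $n>m$ is the number of permutations $\pi\in\mathfrak S_n$ with $\{j\mid\pi_j>\pi_{j+1}\}=I$, evaluated at $z$. *)

From HB Require Import structures.
From mathcomp Require Import all_boot all_order all_algebra all_fingroup.
Set Implicit Arguments. Unset Strict Implicit. Unset Printing Implicit Defensive.
Import Order.TTheory GRing.Theory Num.Theory.
Local Open Scope ring_scope.
Local Open Scope nat_scope.

(* One-line notation of s : 'S_n, with values 0..n-1 (order-isomorphic to 1..n). *)
Definition oneline (n : nat) (s : 'S_n) : seq nat := [seq val (s i) | i <- enum 'I_n].

(* Descent set of s, with positions 1-indexed: j in {1..n-1} with pi_j > pi_{j+1}. *)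
Definition descset (n : nat) (s : 'S_n) : seq nat :=
  [seq j <- iota 1 n.-1 | nth 0 (oneline s) j < nth 0 (oneline s) j.-1].

Definition desc_count (I : seq nat) (n : nat) : nat :=
  #|[set s : 'S_n | all (fun j => j \in I) (descset s) && all (fun j => j \in descset s) I]|.

Definition maxI (I : seq nat) : nat := \max_(i <- I) i.

Definition is_descent_poly (R : nzRingType) (I : seq nat) (p : {poly R}) : Prop :=
  forall n : nat, (maxI I < n)%N -> (p.[n%:R] = (desc_count I n)%:R)%R.

From HB Require Import structures.
From mathcomp Require Import all_boot all_order all_algebra all_fingroup.
From mathcomp Require Import zify ring.
Import Order.TTheory GRing.Theory Num.Theory.

Set Implicit Arguments.
Unset Strict Implicit.
Unset Printing Implicit Defensive.

(* Let m = max I > 0 and n > m.  A permutation of [n] with descent set I is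
   determined by the set A of its first m values, the pattern u in S_m of those
   values, which must have descent set I minus {m}, and its last n - m values, which
   must increase.  The descent at m then occurs iff A does not contain the k + 1
   smallest values, where k + 1 = u(m).  Hence
     d(I; n) = sum_u (binom(n, m) - binom(n - k_u - 1, m - k_u - 1)),
   an identity of polynomials in n.  For real z > m, t |-> binom(z - m + t, t)
   increases on [0, m], so every summand is positive at z; the sum is nonempty since
   every set of positions is the descent set of some permutation.  So real roots
   are at most m <= 2m - 1, and d({}; z) = 1 has none. *)

Local Open Scope nat_scope.

Definition oneline_fun k (g : 'I_k -> 'I_k) : seq nat := [seq val (g i) | i <- enum 'I_k].

Lemma size_oneline_fun k (g : 'I_k -> 'I_k) : size (oneline_fun g) = k.
Proof. by rewrite size_map size_enum_ord. Qed.

Lemma nth_oneline_fun k (g : 'I_k -> 'I_k) (i : 'I_k) : nth 0 (oneline_fun g) i = g i.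
Proof. by rewrite (nth_map i) ?size_enum_ord // nth_ord_enum. Qed.

Lemma nth_oneline_ord k (g : 'I_k -> 'I_k) a (ha : a < k) :
  nth 0 (oneline_fun g) a = g (Ordinal ha).
Proof. by rewrite -nth_oneline_fun. Qed.

Lemma eq_oneline_fun k (g h : 'I_k -> 'I_k) : g =1 h -> oneline_fun g = oneline_fun h.
Proof. by move=> eq_gh; apply: eq_map => i; rewrite eq_gh. Qed.

(* Positions are 1-indexed as in [descset]; elements of [I] outside [1, k - 1] are ignored. *)
Definition descents_match (I : seq nat) k (g : 'I_k -> 'I_k) : bool :=
  let w := oneline_fun g in all (fun j => (nth 0 w j < nth 0 w j.-1) == (j \in I)) (iota 1 k.-1).

Lemma eq_descents_match I k (g h : 'I_k -> 'I_k) :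
  g =1 h -> descents_match I g = descents_match I h.
Proof. by move=> /eq_oneline_fun eq_gh; rewrite /descents_match eq_gh. Qed.

Lemma descents_nilP k (g : 'I_k -> 'I_k) :
  reflect (sorted leq (oneline_fun g)) (descents_match [::] g).
Proof.
apply: (iffP allP) => [h | /sortedP h j].
  apply/(sortedP 0) => i; rewrite size_oneline_fun => hi.
  have := h i.+1; rewrite mem_iota in_nil eqbF_neg -leqNgt; apply; lia.
rewrite mem_iota in_nil eqbF_neg -leqNgt => hj.
have -> : j = j.-1.+1 by lia.
by apply: h; rewrite size_oneline_fun; lia.
Qed.

Lemma descents_nil_id k (g : 'I_k -> 'I_k) :
  injective g -> descents_match [::] g -> g =1 id.
Proof.
move=> ginj /descents_nilP sorted_g i.
have perm_g : perm_eq (oneline_fun g) (iota 0 k).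
  rewrite -val_enum_ord [oneline_fun g](map_comp val g); apply: perm_map.
  apply: uniq_perm => [|| j]; first by rewrite map_inj_uniq // enum_uniq.
    exact: enum_uniq.
  by rewrite mem_enum; apply/mapP; exists (invF ginj j); rewrite ?mem_enum ?f_invF.
have := sorted_eq leq_trans anti_leq sorted_g (iota_sorted 0 k) perm_g.
by move/(congr1 (nth 0 ^~ i)); rewrite nth_oneline_fun nth_iota // => /val_inj.
Qed.

Lemma descents_nil_ord k : descents_match [::] (@id 'I_k).
Proof.
by apply/descents_nilP; rewrite [oneline_fun _]val_enum_ord iota_sorted.
Qed.

Lemma last_oneline_fun_lt k (g : 'I_k -> 'I_k) : 0 < k -> last 0 (oneline_fun g) < k.
Proof.
move=> k_gt0; have lt_k1 : k.-1 < k by rewrite ltn_predL.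
by rewrite -nth_last size_oneline_fun (nth_oneline_ord _ lt_k1).
Qed.

Lemma desc_countE (I : seq nat) n : {in I, forall i, 0 < i < n} ->
  desc_count I n = #|[set s : 'S_n | descents_match I s]|.
Proof.
move=> I_range; apply: eq_card => s; rewrite !inE /descset.
apply/andP/allP => [[/allP desc_in_I /allP I_in_desc] j j_range | desc_eq].
  case: (boolP (j \in I)) => [jI | jNI].
    by have := I_in_desc j jI; rewrite mem_filter j_range andbT => ->.
  rewrite eqbF_neg; apply/negP => desc_j.
  by move/negP: jNI; apply; apply: desc_in_I; rewrite mem_filter desc_j.
split; apply/allP => j.
  by rewrite mem_filter => /andP[desc_j /desc_eq]; rewrite desc_j eq_sym => /eqP.
move=> jI; have j_range : j \in iota 1 n.-1 by rewrite mem_iota; have := I_range j jI; lia.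
by rewrite mem_filter j_range andbT; have := desc_eq j j_range; rewrite jI => /eqP.
Qed.

Lemma maxI_ge (I : seq nat) i : i \in I -> i <= maxI I.
Proof. by move=> iI; rewrite /maxI (leq_bigmax_seq _ iI). Qed.

Lemma maxI_in (I : seq nat) : I != [::] -> maxI I \in I.
Proof.
elim: I => // a [|b I] IH _; rewrite /maxI big_cons.
  by rewrite big_nil maxn0 mem_head.
rewrite /maxn; case: ifP => _; last exact: mem_head.
by rewrite inE (IH isT) orbT.
Qed.

Section Rank.
Variables (T : finType) (f : T -> nat).
Hypothesis f_inj : injective f.

Definition rank_in (A : {set T}) (x : T) : nat := #|[set y in A | f y < f x]|.

Lemma rank_in_lt (A : {set T}) x y : y \in A -> f y < f x -> rank_in A y < rank_in A x.
Proof.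
move=> yA lt_yx; apply: proper_card; apply/properP; split.
  by apply/subsetP => z; rewrite !inE => /andP[-> /ltn_trans]; apply.
by exists y; rewrite !inE ?yA ?lt_yx // ltnn andbF.
Qed.

Lemma rank_in_ltE (A : {set T}) x y : x \in A -> y \in A ->
  (rank_in A x < rank_in A y) = (f x < f y).
Proof.
move=> xA yA; apply/idP/idP; last exact: rank_in_lt.
case: (ltngtP (f x) (f y)) => // [lt_yx | /f_inj ->]; last by rewrite ltnn.
by rewrite ltnNge => /negP[]; apply/ltnW/rank_in_lt.
Qed.

Lemma rank_in_inj (A : {set T}) : {in A &, injective (rank_in A)}.
Proof.
move=> x y xA yA eq_rk; apply: f_inj.
by case: (ltngtP (f x) (f y)) => // [/(rank_in_lt xA) | /(rank_in_lt yA)]; rewrite eq_rk ltnn.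
Qed.

Lemma rank_in_lt_card (A : {set T}) x : x \in A -> rank_in A x < #|A|.
Proof.
move=> xA; apply: proper_card; apply/properP; split.
  by apply/subsetP => z; rewrite inE => /andP[].
by exists x; rewrite // !inE ltnn andbF.
Qed.

(* Standardization of [e] inside [A]; the [insubd] default is never used when
   [#|A| = k] and [e] maps into [A] (see [stdE]). *)
Definition std k (A : {set T}) (e : 'I_k -> T) : {ffun 'I_k -> 'I_k} :=
  [ffun i => insubd i (rank_in A (e i))].

Variables (k : nat) (A : {set T}) (e : 'I_k -> T).
Hypotheses (card_A : #|A| = k) (e_in : forall i, e i \in A).

Lemma stdE i : val (std A e i) = rank_in A (e i).
Proof. by rewrite ffunE val_insubd; have := rank_in_lt_card (e_in i); rewrite card_A => ->. Qed.

Lemma std_ltE i j : (std A e i < std A e j) = (f (e i) < f (e j)).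
Proof. by rewrite !stdE rank_in_ltE. Qed.

Lemma std_inj : injective e -> injective (std A e).
Proof. by move=> e_inj i j /(congr1 val); rewrite !stdE => /rank_in_inj /e_inj; apply. Qed.

End Rank.

Lemma card_pairs (T1 T2 : finType) (P : pred (T1 * T2)) :
  #|[set p | P p]| = \sum_(y : T2) #|[set x | P (x, y)]|.
Proof.
rewrite -sum1_card (eq_bigl P) => [|p]; last by rewrite inE.
rewrite big_mkcond /= (eq_bigr (fun p : T1 * T2 => if P (p.1, p.2) then 1 else 0)); last by case.
rewrite -(pair_bigA _ (fun x y => if P (x, y) then 1 else 0)) exchange_big.
by apply: eq_bigr => y _; rewrite -sum1_card [RHS]big_mkcond; apply: eq_bigr => x _; rewrite inE.
Qed.

Lemma card_supsets (T : finType) (K : {set T}) k : #|K| <= k ->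
  #|[set A : {set T} | (K \subset A) && (#|A| == k)]| = 'C(#|T| - #|K|, k - #|K|).
Proof.
move=> card_K; have card_CK : #|~: K| = #|T| - #|K| by rewrite cardsCs setCK.
have split_K (A : {set T}) : K \subset A -> A = K :|: (A :\: K).
  by move=> KA; rewrite -{1}(setID A K) (setIidPr KA).
rewrite -card_CK -cards_draws -(card_in_imset (f := fun A : {set T} => A :\: K)); last first.
  move=> A B; rewrite !inE => /andP[/split_K eA _] /andP[/split_K eB _] eq_AB.
  by rewrite eA eB eq_AB.
apply: eq_card => B; rewrite inE; apply/imsetP/andP => [[A] | [BK /eqP card_B]].
  rewrite inE => /andP[KA /eqP card_A] ->.
  by split; [rewrite setDE subsetIr | rewrite cardsDS // card_A].
have disj_BK : B :&: K = set0.
  by apply/setP => x; rewrite !inE; apply/andP => -[/(subsetP BK)]; rewrite inE => /negP.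
exists (B :|: K).
  by rewrite inE subsetUr /= cardsU disj_BK cards0 subn0 card_B subnK.
by rewrite setDUl setDv setU0; apply/esym/setDidPl; rewrite -setI_eq0 disj_BK.
Qed.

Lemma card_draws_not_supsets (T : finType) (K : {set T}) k : #|K| <= k ->
  #|[set A : {set T} | (#|A| == k) && ~~ (K \subset A)]| + 'C(#|T| - #|K|, k - #|K|)
  = 'C(#|T|, k).
Proof.
move=> card_K; rewrite -card_supsets // -[RHS]card_draws.
rewrite -(cardsID [set A : {set T} | K \subset A] [set A : {set T} | #|A| == k]) addnC.
by congr (_ + _); apply: eq_card => A; rewrite !inE // andbC.
Qed.

Lemma card_ord_lt N c : c <= N -> #|[set y : 'I_N | y < c]| = c.
Proof.
move=> le_cN; have widen_inj : injective (widen_ord le_cN) by move=> i j /(congr1 val) /= /val_inj.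
rewrite -[RHS]card_ord -(card_imset _ widen_inj).
apply: eq_card => y; rewrite !inE.
apply/idP/imsetP => [y_lt_c | [z _ ->]]; last by rewrite /= ltn_ord.
by exists (Ordinal y_lt_c); rewrite ?inE //; apply/val_inj.
Qed.

Lemma card_inj_no_descents k :
  #|[set v : {ffun 'I_k -> 'I_k} | injectiveb v && descents_match [::] v]| = 1.
Proof.
rewrite -(cards1 [ffun i : 'I_k => i]); apply: eq_card => v; rewrite !inE.
apply/andP/eqP => [[/injectiveP v_inj no_desc] | ->].
  by apply/ffunP => i; rewrite ffunE (descents_nil_id v_inj).
split; first by apply/injectiveP => i j; rewrite !ffunE.
by rewrite (eq_descents_match _ (ffunE _)) descents_nil_ord.
Qed.

Definition init_seg N c : {set 'I_N} := [set y : 'I_N | y <= c].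

Lemma in_init_seg N c (y : 'I_N) : (y \in init_seg N c) = (y <= c).
Proof. by rewrite inE. Qed.

Lemma lt_rank_segmentE N (S : {set 'I_N}) (x w : 'I_N) :
  x \in S -> w \notin S -> (forall y : 'I_N, y < w -> y \in S) ->
  (w < x) = ~~ (init_seg N (rank_in val S x) \subset S).
Proof.
move=> xS wNS below_w; apply/idP/idP => [lt_wx | ].
  have le_w_rank : w <= rank_in val S x.
    rewrite -{1}(card_ord_lt (ltnW (ltn_ord w))); apply: subset_leq_card.
    by apply/subsetP => y; rewrite !inE => lt_yw; rewrite below_w //= (ltn_trans lt_yw lt_wx).
  by apply/negP => /subsetP/(_ w); rewrite in_init_seg le_w_rank (negbTE wNS) => /(_ isT).
apply: contraR; rewrite -leqNgt => le_xw.
have lt_xw : x < w.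
  by rewrite ltn_neqAle le_xw andbT; apply/eqP => /val_inj eq_xw; move: wNS; rewrite -eq_xw xS.
have rank_x : rank_in val S x = x.
  rewrite -[RHS](card_ord_lt (ltnW (ltn_ord x))); apply: eq_card => y; rewrite !inE.
  by apply/andb_idl => lt_yx; apply: below_w (ltn_trans lt_yx lt_xw).
apply/subsetP => y; rewrite in_init_seg rank_x => le_yx.
exact: below_w (leq_ltn_trans le_yx lt_xw).
Qed.

Lemma card_init_seg N c : c < N -> #|init_seg N c| = c.+1.
Proof.
by move=> lt_cN; rewrite -(card_ord_lt lt_cN); apply: eq_card => y; rewrite in_init_seg.
Qed.

Section PermSplit.
Variables m r : nat.
Local Notation n := (m + r).
Implicit Types s t : 'S_n.

Definition prefix_set s : {set 'I_n} := [set s (lshift r i) | i : 'I_m].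

Lemma card_prefix_set s : #|prefix_set s| = m.
Proof. by rewrite card_imset ?card_ord // => i j /perm_inj /lshift_inj. Qed.

Lemma card_suffix_set s : #|~: prefix_set s| = r.
Proof. by rewrite cardsCs setCK card_prefix_set card_ord addKn. Qed.

Lemma prefix_set_lshift s i : s (lshift r i) \in prefix_set s.
Proof. exact: imset_f. Qed.

Lemma suffix_set_rshift s j : s (rshift m j) \in ~: prefix_set s.
Proof.
rewrite inE; apply/imsetP => -[i _ /perm_inj /eqP].
by rewrite eq_sym eq_lrshift.
Qed.

Definition prefix_std s : {ffun 'I_m -> 'I_m} :=
  std val (prefix_set s) (fun i => s (lshift r i)).
Definition suffix_std s : {ffun 'I_r -> 'I_r} :=
  std val (~: prefix_set s) (fun j => s (rshift m j)).

Lemma prefix_stdE s i : val (prefix_std s i) = rank_in val (prefix_set s) (s (lshift r i)).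
Proof. exact/stdE/prefix_set_lshift/card_prefix_set. Qed.

Lemma suffix_stdE s j : val (suffix_std s j) = rank_in val (~: prefix_set s) (s (rshift m j)).
Proof. exact/stdE/suffix_set_rshift/card_suffix_set. Qed.

Lemma prefix_std_ltE s i j :
  (prefix_std s i < prefix_std s j) = (s (lshift r i) < s (lshift r j)).
Proof. exact/std_ltE/prefix_set_lshift/card_prefix_set/val_inj. Qed.

Lemma suffix_std_ltE s i j :
  (suffix_std s i < suffix_std s j) = (s (rshift m i) < s (rshift m j)).
Proof. exact/std_ltE/suffix_set_rshift/card_suffix_set/val_inj. Qed.

Lemma prefix_std_inj s : injective (prefix_std s).
Proof.
apply: (std_inj val_inj (card_prefix_set s) (prefix_set_lshift s)).
by move=> i j /perm_inj /lshift_inj.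
Qed.

Lemma suffix_std_inj s : injective (suffix_std s).
Proof.
apply: (std_inj val_inj (card_suffix_set s) (suffix_set_rshift s)).
by move=> i j /perm_inj /rshift_inj.
Qed.

Definition perm_split s := (prefix_set s, prefix_std s, suffix_std s).

Lemma perm_split_inj : injective perm_split.
Proof.
move=> s t [eq_set /ffunP eq_pre /ffunP eq_suf]; apply/permP => x.
case: (split_ordP x) => [i -> | j ->].
  apply: (rank_in_inj val_inj (prefix_set_lshift s i)); first by rewrite eq_set prefix_set_lshift.
  by rewrite -prefix_stdE eq_pre prefix_stdE eq_set.
apply: (rank_in_inj val_inj (suffix_set_rshift s j)); first by rewrite eq_set suffix_set_rshift.
by rewrite -suffix_stdE eq_suf suffix_stdE eq_set.
Qed.

Definition split_codomain :=
  setX (setX [set A : {set 'I_n} | #|A| == m] [set u : {ffun 'I_m -> 'I_m} | injectiveb u])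
       [set v : {ffun 'I_r -> 'I_r} | injectiveb v].

Lemma perm_split_in s : perm_split s \in split_codomain.
Proof.
rewrite !inE /= card_prefix_set eqxx.
by apply/andP; split; apply/injectiveP; [apply: prefix_std_inj | apply: suffix_std_inj].
Qed.

Lemma card_split_codomain : #|split_codomain| = n`!.
Proof.
rewrite !cardsX card_draws !card_inj_ffuns !card_ord !ffactnn -mulnA.
by rewrite -{2}[r](addKn m) bin_fact ?leq_addr.
Qed.

Lemma card_perm_split (P : pred ({set 'I_n} * {ffun 'I_m -> 'I_m} * {ffun 'I_r -> 'I_r})) :
  #|[set s : 'S_n | P (perm_split s)]| = #|[set t in split_codomain | P t]|.
Proof.
have img : perm_split @: setT = split_codomain.
  apply/eqP; rewrite eqEcard card_split_codomain (card_imset _ perm_split_inj).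
  rewrite cardsT card_Sn leqnn andbT.
  by apply/subsetP => _ /imsetP[s _ ->]; apply: perm_split_in.
rewrite -(card_imset _ perm_split_inj) -img; apply: eq_card => t; rewrite !inE.
apply/imsetP/andP => [[s] | [/imsetP[s _ ->] Pt]]; last by exists s; rewrite ?inE.
by rewrite inE => Ps ->; split; first exact: imset_f.
Qed.

Lemma nth_oneline_lshift s a (lt_am : a < m) :
  nth 0 (oneline_fun s) a = s (lshift r (Ordinal lt_am)).
Proof. by rewrite (nth_oneline_ord s (ltn_addr r lt_am)); congr (val (s _)); apply/val_inj. Qed.

Lemma nth_oneline_rshift s a (lt_ar : a < r) :
  nth 0 (oneline_fun s) (m + a) = s (rshift m (Ordinal lt_ar)).
Proof. exact: (nth_oneline_fun s (rshift m (Ordinal lt_ar))). Qed.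

Lemma below_first_suffix s (r_gt0 : 0 < r) : descents_match [::] (suffix_std s) ->
  forall y : 'I_n, y < s (rshift m (Ordinal r_gt0)) -> y \in prefix_set s.
Proof.
move=> /(descents_nil_id (@suffix_std_inj s)) suffix_id y lt_y.
have : rank_in val (~: prefix_set s) (s (rshift m (Ordinal r_gt0))) = 0.
  by rewrite -suffix_stdE suffix_id.
by move/cards0_eq/setP/(_ y); rewrite !inE lt_y andbT => /negbFE.
Qed.

(* The first value of an increasing suffix is the least value outside the prefix set,
   so it lies below the last prefix value [x] iff the prefix set misses one of the
   values [<= rank x]. *)
Lemma boundary_descentE s (m_gt0 : 0 < m) (r_gt0 : 0 < r) :
  descents_match [::] (suffix_std s) ->
  (nth 0 (oneline_fun s) m < nth 0 (oneline_fun s) m.-1)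
  = ~~ (init_seg n (last 0 (oneline_fun (prefix_std s))) \subset prefix_set s).
Proof.
move=> no_desc; have lt_m1 : m.-1 < m by rewrite prednK.
have := nth_oneline_rshift s r_gt0; rewrite addn0 => ->.
rewrite (nth_oneline_lshift s lt_m1) -nth_last size_oneline_fun (nth_oneline_ord _ lt_m1).
rewrite prefix_stdE; apply: lt_rank_segmentE; first exact: prefix_set_lshift.
  by have := suffix_set_rshift s (Ordinal r_gt0); rewrite inE.
exact: below_first_suffix.
Qed.

Lemma descents_match_split I s (m_gt0 : 0 < m) (r_gt0 : 0 < r) :
  m \in I -> {in I, forall i, i <= m} ->
  descents_match I s =
  [&& descents_match I (prefix_std s), descents_match [::] (suffix_std s)
    & ~~ (init_seg n (last 0 (oneline_fun (prefix_std s))) \subset prefix_set s)].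
Proof.
move=> mI I_le_m.
have split_iota : iota 1 n.-1 = iota 1 m.-1 ++ m :: map (addn m) (iota 1 r.-1).
  have -> : n.-1 = m.-1 + (1 + r.-1) by lia.
  by rewrite iotaD add1n prednK // -iotaDl addn1.
have prefix_part :
    all (fun j => (nth 0 (oneline_fun s) j < nth 0 (oneline_fun s) j.-1) == (j \in I))
        (iota 1 m.-1)
    = descents_match I (prefix_std s).
  apply: eq_in_all => j; rewrite mem_iota => j_range.
  have lt_jm : j < m by lia.
  have lt_j1m : j.-1 < m by lia.
  rewrite (nth_oneline_lshift s lt_jm) (nth_oneline_lshift s lt_j1m).
  by rewrite (nth_oneline_ord _ lt_jm) (nth_oneline_ord _ lt_j1m) prefix_std_ltE.
have suffix_part :
    all (fun j => (nth 0 (oneline_fun s) j < nth 0 (oneline_fun s) j.-1) == (j \in I))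
        (map (addn m) (iota 1 r.-1))
    = descents_match [::] (suffix_std s).
  rewrite all_map; apply: eq_in_all => a; rewrite mem_iota => a_range /=.
  have lt_ar : a < r by lia.
  have lt_a1r : a.-1 < r by lia.
  have -> : (m + a).-1 = m + a.-1 by lia.
  have -> : (m + a \in I) = false by apply/negP => /I_le_m; lia.
  rewrite (nth_oneline_rshift s lt_ar) (nth_oneline_rshift s lt_a1r) in_nil.
  by rewrite (nth_oneline_ord _ lt_ar) (nth_oneline_ord _ lt_a1r) suffix_std_ltE.
rewrite {1}/descents_match /= split_iota all_cat /= mI eqb_id prefix_part suffix_part.
case: (boolP (descents_match [::] (suffix_std s))) => [no_desc | _]; last by rewrite !andbF.
by rewrite boundary_descentE // andbT.
Qed.
End PermSplit.

Lemma desc_count_sum I n : I != [::] -> all (fun i => 0 < i) I -> maxI I < n ->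
  desc_count I n =
  \sum_(u : {ffun 'I_(maxI I) -> 'I_(maxI I)} | injectiveb u && descents_match I u)
    #|[set A : {set 'I_n} |
       (#|A| == maxI I) && ~~ (init_seg n (last 0 (oneline_fun u)) \subset A)]|.
Proof.
move=> I_neq0 /allP I_gt0; set m := maxI I => lt_mn.
have [r eq_n] : exists r, n = m + r by exists (n - m); lia.
subst n.
have mI : m \in I by apply: maxI_in.
have m_gt0 : 0 < m by apply: I_gt0.
have r_gt0 : 0 < r by lia.
have I_le_m : {in I, forall i, i <= m} by move=> i; apply: maxI_ge.
rewrite desc_countE => [|i iI]; last by have := I_gt0 i iI; have := I_le_m i iI; lia.
pose P (t : {set 'I_(m + r)} * {ffun 'I_m -> 'I_m} * {ffun 'I_r -> 'I_r}) :=
  [&& descents_match I t.1.2, descents_match [::] t.2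
    & ~~ (init_seg (m + r) (last 0 (oneline_fun t.1.2)) \subset t.1.1)].
rewrite (eq_card (B := [set s | P (perm_split s)])) => [|s]; last first.
  by rewrite !inE (descents_match_split s m_gt0 r_gt0 mI I_le_m).
rewrite card_perm_split.
pose Q (p : {set 'I_(m + r)} * {ffun 'I_m -> 'I_m}) :=
  [&& #|p.1| == m, injectiveb p.2, descents_match I p.2
    & ~~ (init_seg (m + r) (last 0 (oneline_fun p.2)) \subset p.1)].
have -> : [set t in split_codomain m r | P t] =
    setX [set p | Q p] [set v : {ffun 'I_r -> 'I_r} | injectiveb v && descents_match [::] v].
  apply/setP => -[[A u] v]; rewrite !inE /P /Q /=.
  by case: (#|A| == m) (injectiveb u) (injectiveb v) (descents_match I u)
           (descents_match [::] v) (_ \subset A) => [] [] [] [] [] [].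
rewrite cardsX card_inj_no_descents muln1 card_pairs [RHS]big_mkcond /=.
apply: eq_bigr => u _; case: ifP => [/andP[u_inj u_desc] | u_notin].
  by apply: eq_card => A; rewrite !inE /Q /= u_inj u_desc.
by apply: eq_card0 => A; rewrite !inE /Q /=; case: (#|A| == m); rewrite //= andbA u_notin.
Qed.

Section Realizer.
Variables (I : seq nat) (m : nat).

Definition ascents_upto a := count (fun j => j \notin I) (iota 1 a).

Lemma ascents_uptoS a : ascents_upto a.+1 = ascents_upto a + (a.+1 \notin I).
Proof. by rewrite /ascents_upto -[a.+1]addn1 iotaD count_cat /= addn0 add1n addn1. Qed.

(* Positions are ordered by the number of non-descents up to them, and backwards
   within each such block, so that exactly the positions of [I] become descents. *)
Definition descent_key (i : 'I_m) := ascents_upto i * m.+1 + (m - i).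

Lemma descent_key_inj : injective descent_key.
Proof.
move=> i j /(congr1 (modn^~ m.+1)); rewrite /descent_key !modnMDl !modn_small; try lia.
by case: i j => [i lt_im] [j lt_jm] /= eq_sub; apply/val_inj => /=; lia.
Qed.

Definition realizer : {ffun 'I_m -> 'I_m} := std descent_key [set: 'I_m] id.

Lemma realizer_inj : injective realizer.
Proof. by apply: (std_inj descent_key_inj); rewrite ?cardsT ?card_ord. Qed.

Lemma descents_match_realizer : descents_match I realizer.
Proof.
apply/allP => j; rewrite mem_iota => j_range.
have lt_jm : j < m by lia.
have lt_j1m : j.-1 < m by lia.
rewrite (nth_oneline_ord _ lt_jm) (nth_oneline_ord _ lt_j1m).
have card_setT : #|[set: 'I_m]| = m by rewrite cardsT card_ord.
rewrite (std_ltE descent_key_inj card_setT) // /descent_key /=.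
have -> : j = j.-1.+1 by lia.
rewrite ascents_uptoS /=.
by case: (j.-1.+1 \in I) => /=; rewrite ?addn0 ?addn1 ?mulSn; apply/eqP; lia.
Qed.

End Realizer.

Lemma desc_count_nil n : desc_count [::] n = 1.
Proof.
rewrite desc_countE // -(cards1 (1%g : 'S_n)); apply: eq_card => s; rewrite !inE.
apply/idP/eqP => [no_desc | ->].
  by apply/permP => i; rewrite perm1 (descents_nil_id (@perm_inj _ s)).
by rewrite (eq_descents_match _ (perm1 (T := 'I_n))) descents_nil_ord.
Qed.

Local Open Scope ring_scope.

Definition binomp (R : fieldType) (a k : nat) : {poly R} :=
  (k`!%:R)^-1 *: \prod_(i < k) ('X - (a + i)%:R%:P).

Lemma horner_binomp (R : fieldType) a k (x : R) :
  (binomp R a k).[x] = (k`!%:R)^-1 * \prod_(i < k) (x - (a + i)%:R).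
Proof.
rewrite hornerZ horner_prod; congr (_ * _).
by apply: eq_bigr => i _; rewrite hornerXsubC.
Qed.

Lemma binomp_nat (R : numFieldType) a k (N : nat) : (a + k <= N)%N ->
  (binomp R a k).[N%:R] = 'C(N - a, k)%:R.
Proof.
move=> le_N; rewrite horner_binomp.
have -> : \prod_(i < k) (N%:R - (a + i)%:R) = (\prod_(i < k) (N - a - i))%N%:R :> R.
  rewrite natr_prod; apply: eq_bigr => i _.
  by rewrite !natrB; [rewrite natrD opprD addrA | lia | have := ltn_ord i; lia].
have ffact_prod M : (\prod_(i < k) (M - i))%N = M ^_ k.
  by elim: k {le_N} => [|k IH]; rewrite ?big_ord0 ?ffactn0 // big_ord_recr /= IH ffactnSr.
by rewrite ffact_prod -bin_ffact natrM mulrC mulfK // pnatr_eq0 -lt0n fact_gt0.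
Qed.

Lemma binomp_recl (R : fieldType) a k (z : R) :
  (binomp R a k.+1).[z] = (binomp R a.+1 k).[z] * ((z - a%:R) / k.+1%:R).
Proof.
rewrite !horner_binomp big_ord_recl /= addn0 factS natrM invfM.
under eq_bigr => i _ do rewrite /bump /= add1n addnS -addSn.
by ring.
Qed.

(* [t |-> binom(z - m + t, t)] increases on [0, m] when [z > m]: each step multiplies
   by [(z - m + t + 1) / (t + 1) > 1]. *)
Lemma binomp_lt (R : numFieldType) m t (z : R) : m%:R < z -> (t < m)%N ->
  (binomp R (m - t) t).[z] < (binomp R 0 m).[z].
Proof.
move=> lt_mz lt_tm; pose G t := (binomp R (m - t) t).[z].
have G_step i : (i < m)%N -> G i.+1 = G i * ((z - (m - i.+1)%:R) / i.+1%:R).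
  by move=> lt_im; rewrite /G binomp_recl; congr ((binomp R _ i).[z] * _); lia.
have step_gt1 i : (i < m)%N -> 1 < (z - (m - i.+1)%:R) / i.+1%:R.
  move=> lt_im; rewrite ltr_pdivlMr ?ltr0n // mul1r ltrBrDr -natrD.
  by apply: le_lt_trans lt_mz; rewrite ler_nat; lia.
have G_gt0 i : (i <= m)%N -> 0 < G i.
  elim: i => [|i IH] le_im; first by rewrite /G horner_binomp big_ord0 mulr1 fact0 invr1 ltr01.
  by rewrite G_step //; apply: mulr_gt0; [apply: IH; lia | apply: lt_trans (step_gt1 i le_im)].
have G_incr : {in [pred i | i <= m]%N &, {homo G : i j / (i < j)%N >-> i < j}}.
  apply: (homo_ltn_in lt_trans) => [i j _ le_jm k /andP[_ lt_kj] | i _ le_im].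
    by move: le_jm; rewrite !inE; lia.
  rewrite inE /= in le_im; rewrite G_step // -{1}(mulr1 (G i)) ltr_pM2l ?step_gt1 //.
  exact/G_gt0/ltnW.
by have := G_incr t m (ltnW lt_tm) (leqnn m) lt_tm; rewrite /G subnn.
Qed.

Lemma eq_poly_nat_gt (R : numDomainType) (p q : {poly R}) M :
  (forall n : nat, (M < n)%N -> p.[n%:R] = q.[n%:R]) -> p = q.
Proof.
move=> eq_pq; apply/eqP; rewrite -subr_eq0; apply/negPn/negP => pq_neq0.
pose roots := [seq (M.+1 + i)%:R : R | i <- iota 0 (size (p - q))].
suff : (size roots < size (p - q)%R)%N by rewrite size_map size_iota ltnn.
apply: max_poly_roots => //.
  by apply/allP => _ /mapP[i _ ->]; rewrite /root hornerD hornerN eq_pq ?subrr //; lia.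
by rewrite map_inj_uniq ?iota_uniq // => i j /eqP; rewrite eqr_nat => /eqP; lia.
Qed.

Lemma descent_poly_nil (R : numDomainType) (p : {poly R}) : is_descent_poly [::] p -> p = 1.
Proof.
move=> desc_p; apply: (@eq_poly_nat_gt _ _ _ 0) => n n_gt0.
by rewrite desc_p ?desc_count_nil ?hornerC // /maxI big_nil.
Qed.

Lemma descent_polyE (R : numFieldType) (I : seq nat) (p : {poly R}) :
  I != [::] -> all (fun i => 0 < i)%N I -> is_descent_poly I p ->
  p = \sum_(u : {ffun 'I_(maxI I) -> 'I_(maxI I)} | injectiveb u && descents_match I u)
        (binomp R 0 (maxI I) - binomp R (last 0%N (oneline_fun u)).+1
                                         (maxI I - (last 0%N (oneline_fun u)).+1)).
Proof.
move=> I_neq0 I_gt0 desc_p; set m := maxI I.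
have m_gt0 : (0 < m)%N by move/allP: I_gt0; apply; apply: maxI_in.
apply: (@eq_poly_nat_gt _ _ _ m) => n lt_mn.
rewrite desc_p // desc_count_sum // natr_sum horner_sum; apply: eq_bigr => u _.
set k := last 0%N (oneline_fun u).
have lt_km : (k < m)%N by apply: last_oneline_fun_lt.
have le_n : (k.+1 + (m - k.+1) <= n)%N by lia.
rewrite hornerD hornerN !binomp_nat ?subn0 ?add0n ?(ltnW lt_mn) //.
have := @card_draws_not_supsets _ (init_seg n k) m.
rewrite card_ord card_init_seg; last by lia.
by move=> /(_ lt_km) <-; rewrite natrD addrK.
Qed.

Lemma descent_poly_gt0 (R : numFieldType) (I : seq nat) (p : {poly R}) (z : R) :
  I != [::] -> all (fun i => 0 < i)%N I -> is_descent_poly I p -> (maxI I)%:R < z ->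
  0 < p.[z].
Proof.
move=> I_neq0 I_gt0 desc_p lt_mz; set m := maxI I.
have m_gt0 : (0 < m)%N by move/allP: I_gt0; apply; apply: maxI_in.
rewrite (descent_polyE I_neq0 I_gt0 desc_p) horner_sum -/m.
have term_gt0 (u : {ffun 'I_m -> 'I_m}) :
    0 < (binomp R 0 m - binomp R (last 0%N (oneline_fun u)).+1
                                 (m - (last 0%N (oneline_fun u)).+1)).[z].
  have lt_km := last_oneline_fun_lt u m_gt0.
  rewrite hornerD hornerN subr_gt0.
  have := binomp_lt (t := (m - (last 0%N (oneline_fun u)).+1)%N) lt_mz.
  by rewrite subKn //; apply; lia.
rewrite (bigD1 (realizer I m)) /=; last first.
  by rewrite descents_match_realizer andbT; apply/injectiveP/realizer_inj.
apply: lt_le_trans (term_gt0 (realizer I m)) _; rewrite lerDl.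
by apply: sumr_ge0 => u _; apply/ltW/term_gt0.
Qed.

Theorem proposition4p19 (R : rcfType) (I : seq nat)
  (hI : all (fun i => (0 < i)%N) I) (p : {poly R})
  (hp : is_descent_poly I p) (z0 : R) (hz : root p z0) :
  z0 <= 2 * (maxI I)%:R - 1.
Proof.
have [I_nil | I_neq0] := eqVneq I [::].
  by rewrite I_nil in hp; rewrite /root (descent_poly_nil hp) hornerC oner_eq0 in hz.
have z0_le_m : z0 <= (maxI I)%:R.
  by rewrite leNgt; apply: contraL hz => /(descent_poly_gt0 I_neq0 hI hp) /lt0r_neq0.
have m_ge1 : (1 <= maxI I)%N by move/allP: hI; apply; apply: maxI_in.
apply: le_trans z0_le_m _.
by rewrite lerBrDr mulr_natl mulr2n lerD2l ler1n.
Qed.
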